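(* Let $\varepsilon\in\mathbb R$ and let $u\in C^4([-1,1])$ be positive. With $H:=\frac12\bigl(\frac{1}{u\sqrt{1+u'^2}}-\frac{u''}{(1+u'^2)^{3/2}}\bigr)$ define $$M[u](x):=\frac{u(x)u'(x)H'(x)}{1+u'(x)^2}+\frac{u(x)H(x)^2}{\sqrt{1+u'(x)^2}}-\frac{H(x)}{1+u'(x)^2}-\varepsilon\frac{u(x)}{\sqrt{1+u'(x)^2}}.$$ Then $$\frac{d}{dx}M[u](x)=u(x)u'(x)\Bigl\{\frac{1}{u\sqrt{1+u'^2}}\frac{d}{dx}\Bigl(\frac{u}{\sqrt{1+u'^2}}H'\Bigr)+\frac12H\Bigl(\frac{u''}{(1+u'^2)^{3/2}}+\frac{1}{u\sqrt{1+u'^2}}\Bigr)^2-2\varepsilon H\Bigr\}(x).$$ *)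

From Stdlib Require Import Reals Lra ClassicalEpsilon.
Open Scope R_scope.

Definition Icc (a b : R) (x : R) : Prop := a <= x <= b.

Definition I11 : R -> Prop := Icc (-1) 1.

(* f has derivative l at x relative to the set D
   (one-sided at endpoints of an interval). *)
Definition has_deriv_within (D : R -> Prop) (f : R -> R) (x l : R) : Prop :=
  forall eps, 0 < eps -> exists delta, 0 < delta /\
    forall y, D y -> Rabs (y - x) < delta ->
      Rabs (f y - f x - l * (y - x)) <= eps * Rabs (y - x).

Definition continuous_within (D : R -> Prop) (f : R -> R) (x : R) : Prop :=
  forall eps, 0 < eps -> exists delta, 0 < delta /\
    forall y, D y -> Rabs (y - x) < delta -> Rabs (f y - f x) < eps.

(* Total derivative operator relative to D (a chosen derivative when it exists;
   unique on a nondegenerate interval). *)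
Definition Dw (D : R -> Prop) (f : R -> R) (x : R) : R :=
  epsilon (inhabits 0) (fun l => has_deriv_within D f x l).

Definition Dn (D : R -> Prop) (n : nat) (f : R -> R) : R -> R :=
  Nat.iter n (Dw D) f.

Definition Cn_on (D : R -> Prop) (n : nat) (f : R -> R) : Prop :=
  (forall k, (k < n)%nat -> forall x, D x ->
     has_deriv_within D (Dn D k f) x (Dn D (S k) f x)) /\
  (forall x, D x -> continuous_within D (Dn D n f) x).

Definition du1 (u : R -> R) : R -> R := Dw I11 u.
Definition du2 (u : R -> R) : R -> R := Dw I11 (Dw I11 u).

Definition Hf (u : R -> R) (x : R) : R :=
  / 2 * (1 / (u x * sqrt (1 + du1 u x ^ 2))
         - du2 u x / (sqrt (1 + du1 u x ^ 2)) ^ 3).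

Definition Mf (eps : R) (u : R -> R) (x : R) : R :=
  u x * du1 u x * Dw I11 (Hf u) x / (1 + du1 u x ^ 2)
  + u x * Hf u x ^ 2 / sqrt (1 + du1 u x ^ 2)
  - Hf u x / (1 + du1 u x ^ 2)
  - eps * u x / sqrt (1 + du1 u x ^ 2).

From Stdlib Require Import Reals Lra Lia ClassicalEpsilon.
Open Scope R_scope.

(* M[u] is built from u, u', u'', H and H' by field operations and a square
   root, so M[u]' follows from the calculus rules for derivatives relative to
   [-1,1]; H'' exists because H' is an explicit expression in u, ..., u'''
   and u is C^4.  In the comparison with the claimed formula the terms
   carrying H' cancel precisely because of the definition of H
   (2uH/s = 1/s^2 - u u''/s^4, where s = sqrt(1 + u'^2)), and the rest is a
   rational identity once s^2 = 1 + u'^2 is used. *)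

Lemma has_deriv_within_of_derivable_pt_lim D h z l :
  derivable_pt_lim h z l -> has_deriv_within D h z l.
Proof.
  intros Hh e he. destruct (Hh e he) as [del Hdel].
  exists del. split; [apply cond_pos|].
  intros w _ hw. destruct (Req_dec w z) as [->|hne].
  - rewrite !Rminus_diag, Rmult_0_r, Rminus_diag, Rabs_R0. lra.
  - assert (hwz : w - z <> 0) by lra.
    specialize (Hdel (w - z) hwz hw). replace (z + (w - z)) with w in Hdel by ring.
    replace (h w - h z - l * (w - z)) with (((h w - h z) / (w - z) - l) * (w - z))
      by (field; exact hwz).
    rewrite Rabs_mult. apply Rmult_le_compat_r; [apply Rabs_pos | lra].
Qed.

Section HasDerivWithin.

Variable D : R -> Prop.
Local Notation d := (has_deriv_within D).

Lemma has_deriv_within_eq f x l1 l2 : d f x l1 -> l1 = l2 -> d f x l2.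
Proof. now intros H ->. Qed.

Lemma has_deriv_within_ext f g x l : (forall y, f y = g y) -> d g x l -> d f x l.
Proof.
  intros E H e he. destruct (H e he) as [del [hdel H']].
  exists del. split; [exact hdel|]. intros y Dy hy. rewrite !E. auto.
Qed.

Lemma has_deriv_within_ext_in f g x l :
  (forall y, D y -> f y = g y) -> D x -> d g x l -> d f x l.
Proof.
  intros E Dx H e he. destruct (H e he) as [del [hdel H']].
  exists del. split; [exact hdel|]. intros y Dy hy. rewrite !E by assumption. auto.
Qed.

Lemma has_deriv_within_const c x : d (fun _ => c) x 0.
Proof. apply has_deriv_within_of_derivable_pt_lim, derivable_pt_lim_const. Qed.

Lemma has_deriv_within_plus f g x a b :
  d f x a -> d g x b -> d (fun y => f y + g y) x (a + b).
Proof.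
  intros Hf Hg e he.
  destruct (Hf (e / 2)) as [d1 [p1 H1]]; [lra|].
  destruct (Hg (e / 2)) as [d2 [p2 H2]]; [lra|].
  exists (Rmin d1 d2). split; [apply Rmin_glb_lt; lra|]. intros y Dy hy.
  specialize (H1 y Dy (Rlt_le_trans _ _ _ hy (Rmin_l _ _))).
  specialize (H2 y Dy (Rlt_le_trans _ _ _ hy (Rmin_r _ _))).
  replace (f y + g y - (f x + g x) - (a + b) * (y - x))
    with ((f y - f x - a * (y - x)) + (g y - g x - b * (y - x))) by ring.
  eapply Rle_trans; [apply Rabs_triang | lra].
Qed.

Lemma has_deriv_within_lipschitz f x a : d f x a ->
  exists del, 0 < del /\ forall y, D y -> Rabs (y - x) < del ->
    Rabs (f y - f x) <= (Rabs a + 1) * Rabs (y - x).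
Proof.
  intros Hf. destruct (Hf 1 Rlt_0_1) as [del [hdel H]].
  exists del. split; [exact hdel|]. intros y Dy hy. specialize (H y Dy hy).
  replace (f y - f x) with ((f y - f x - a * (y - x)) + a * (y - x)) by ring.
  eapply Rle_trans; [apply Rabs_triang|]. rewrite Rabs_mult. lra.
Qed.

Lemma has_deriv_within_comp (E : R -> Prop) h f x h' a :
  (forall y, D y -> E (f y)) -> has_deriv_within E h (f x) h' -> d f x a ->
  d (fun y => h (f y)) x (h' * a).
Proof.
  intros fDE Hh Hf e he.
  set (A := Rabs a + 1). set (B := Rabs h' + 1).
  assert (hA : 0 < A) by (pose proof (Rabs_pos a); unfold A; lra).
  assert (hB : 0 < B) by (pose proof (Rabs_pos h'); unfold B; lra).
  destruct (Hh (e / (2 * A))) as [d1 [p1 H1]]; [apply Rdiv_lt_0_compat; lra|].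
  destruct (Hf (e / (2 * B))) as [d2 [p2 H2]]; [apply Rdiv_lt_0_compat; lra|].
  destruct (has_deriv_within_lipschitz f x a Hf) as [d3 [p3 H3]]. fold A in H3.
  exists (Rmin (Rmin d2 d3) (d1 / A)).
  split; [repeat apply Rmin_glb_lt; try apply Rdiv_lt_0_compat; lra|].
  intros y Dy hy.
  pose proof (Rmin_l (Rmin d2 d3) (d1 / A)). pose proof (Rmin_r (Rmin d2 d3) (d1 / A)).
  pose proof (Rmin_l d2 d3). pose proof (Rmin_r d2 d3).
  specialize (H2 y Dy ltac:(lra)). specialize (H3 y Dy ltac:(lra)).
  set (r := Rabs (y - x)) in *. assert (hr : 0 <= r) by apply Rabs_pos.
  assert (hfy : Rabs (f y - f x) < d1).
  { apply (Rle_lt_trans _ (A * r)); [exact H3|].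
    replace d1 with (A * (d1 / A)) by (field; lra). apply Rmult_lt_compat_l; lra. }
  specialize (H1 (f y) (fDE y Dy) hfy).
  replace (h (f y) - h (f x) - h' * a * (y - x)) with
    ((h (f y) - h (f x) - h' * (f y - f x)) + h' * (f y - f x - a * (y - x))) by ring.
  eapply Rle_trans; [apply Rabs_triang|]. rewrite Rabs_mult.
  assert (T1 : e / (2 * A) * Rabs (f y - f x) <= e / 2 * r).
  { replace (e / 2 * r) with (e / (2 * A) * (A * r)) by (field; lra).
    apply Rmult_le_compat_l; [left; apply Rdiv_lt_0_compat|]; lra. }
  assert (T2 : Rabs h' * Rabs (f y - f x - a * (y - x)) <= e / 2 * r).
  { apply (Rle_trans _ (Rabs h' * (e / (2 * B) * r))).
    - apply Rmult_le_compat_l; [apply Rabs_pos | exact H2].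
    - replace (e / 2 * r) with (B * (e / (2 * B) * r)) by (field; lra).
      apply Rmult_le_compat_r; [|unfold B; lra].
      apply Rmult_le_pos; [left; apply Rdiv_lt_0_compat|]; lra. }
  lra.
Qed.

Lemma has_deriv_within_comp_derivable h f x h' a :
  derivable_pt_lim h (f x) h' -> d f x a -> d (fun y => h (f y)) x (h' * a).
Proof.
  intros Hh. apply has_deriv_within_comp with (E := fun _ => True); [easy|].
  now apply has_deriv_within_of_derivable_pt_lim.
Qed.

Lemma has_deriv_within_scal c f x a : d f x a -> d (fun y => c * f y) x (c * a).
Proof.
  intros H. eapply has_deriv_within_eq.
  - apply (has_deriv_within_comp_derivable (fun z => c * z) f x (c * 1) a); [|exact H].
    exact (derivable_pt_lim_scal id c (f x) 1 (derivable_pt_lim_id _)).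
  - ring.
Qed.

Lemma has_deriv_within_opp f x a : d f x a -> d (fun y => - f y) x (- a).
Proof.
  intros H. apply has_deriv_within_ext with (g := fun y => (-1) * f y); [intros; ring|].
  eapply has_deriv_within_eq; [apply has_deriv_within_scal, H | ring].
Qed.

Lemma has_deriv_within_minus f g x a b :
  d f x a -> d g x b -> d (fun y => f y - g y) x (a - b).
Proof. intros Hf Hg. now apply has_deriv_within_plus, has_deriv_within_opp. Qed.

Lemma has_deriv_within_pow f x a n :
  d f x a -> d (fun y => f y ^ n) x (INR n * f x ^ pred n * a).
Proof.
  apply has_deriv_within_comp_derivable with (h := fun z => z ^ n), derivable_pt_lim_pow.
Qed.

Lemma has_deriv_within_mult f g x a b :
  d f x a -> d g x b -> d (fun y => f y * g y) x (a * g x + f x * b).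
Proof.
  intros Hf Hg.
  apply has_deriv_within_ext with (g := fun y => / 4 * ((f y + g y) ^ 2 - (f y - g y) ^ 2)).
  { intros; field. }
  eapply has_deriv_within_eq.
  - apply has_deriv_within_scal, has_deriv_within_minus; apply has_deriv_within_pow;
      [apply has_deriv_within_plus | apply has_deriv_within_minus]; eassumption.
  - cbn [INR pred]. field.
Qed.

Lemma has_deriv_within_inv g x b :
  g x <> 0 -> d g x b -> d (fun y => / g y) x (- b / g x ^ 2).
Proof.
  intros nz H. apply has_deriv_within_ext with (g := fun y => 1 / g y).
  { intros; unfold Rdiv; ring. }
  eapply has_deriv_within_eq.
  - apply (has_deriv_within_comp_derivable (fun z => 1 / z)); [|exact H].
    exact (derivable_pt_lim_div (fct_cte 1) id (g x) 0 1
             (derivable_pt_lim_const 1 _) (derivable_pt_lim_id _) nz).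
  - unfold fct_cte, id, Rsqr. field. exact nz.
Qed.

Lemma has_deriv_within_div f g x a b : g x <> 0 -> d f x a -> d g x b ->
  d (fun y => f y / g y) x (a * / g x + f x * (- b / g x ^ 2)).
Proof.
  intros nz Hf Hg. apply (has_deriv_within_mult f (fun y => / g y)); [exact Hf|].
  now apply has_deriv_within_inv.
Qed.

Lemma has_deriv_within_sqrt f x a :
  0 < f x -> d f x a -> d (fun y => sqrt (f y)) x (/ (2 * sqrt (f x)) * a).
Proof. intros p. now apply has_deriv_within_comp_derivable, derivable_pt_lim_sqrt. Qed.

End HasDerivWithin.

Lemma Icc_point_at_distance a b x t : Icc a b x -> 0 <= t <= (b - a) / 2 ->
  exists y, Icc a b y /\ Rabs (y - x) = t.
Proof.
  intros [hax hxb] ht. destruct (Rle_dec ((a + b) / 2) x).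
  - exists (x - t). split; [split; lra|].
    replace (x - t - x) with (- t) by ring. rewrite Rabs_Ropp, Rabs_right; lra.
  - exists (x + t). split; [split; lra|].
    replace (x + t - x) with t by ring. rewrite Rabs_right; lra.
Qed.

Lemma has_deriv_within_Icc_unique a b f x l1 l2 : a < b -> Icc a b x ->
  has_deriv_within (Icc a b) f x l1 -> has_deriv_within (Icc a b) f x l2 -> l1 = l2.
Proof.
  intros hab Hx H1 H2. destruct (Req_dec l1 l2) as [|hne]; [assumption|exfalso].
  assert (hl : 0 < Rabs (l1 - l2)) by (apply Rabs_pos_lt; lra).
  destruct (H1 (Rabs (l1 - l2) / 4)) as [d1 [p1 K1]]; [lra|].
  destruct (H2 (Rabs (l1 - l2) / 4)) as [d2 [p2 K2]]; [lra|].
  set (t := Rmin (Rmin d1 d2 / 2) ((b - a) / 2)).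
  assert (hd : 0 < Rmin d1 d2) by (apply Rmin_glb_lt; lra).
  assert (ht : 0 < t) by (apply Rmin_glb_lt; lra).
  assert (t1 : t <= Rmin d1 d2 / 2) by apply Rmin_l.
  assert (t2 : t <= (b - a) / 2) by apply Rmin_r.
  pose proof (Rmin_l d1 d2). pose proof (Rmin_r d1 d2).
  destruct (Icc_point_at_distance a b x t Hx ltac:(lra)) as [y [Dy hy]].
  specialize (K1 y Dy ltac:(lra)). specialize (K2 y Dy ltac:(lra)).
  assert (Hbound : Rabs ((l1 - l2) * (y - x)) <= Rabs (l1 - l2) / 2 * t).
  { replace ((l1 - l2) * (y - x))
      with ((f y - f x - l2 * (y - x)) - (f y - f x - l1 * (y - x))) by ring.
    eapply Rle_trans; [apply Rabs_triang|]. rewrite Rabs_Ropp, hy in *. lra. }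
  rewrite Rabs_mult, hy in Hbound. nra.
Qed.

Lemma Dw_Icc_eq a b f x l : a < b -> Icc a b x ->
  has_deriv_within (Icc a b) f x l -> Dw (Icc a b) f x = l.
Proof.
  intros hab Hx H. apply (has_deriv_within_Icc_unique a b f x); [exact hab|exact Hx| |exact H].
  unfold Dw. apply epsilon_spec. exists l. exact H.
Qed.

Lemma Dw_I11_eq f x l : I11 x -> has_deriv_within I11 f x l -> Dw I11 f x = l.
Proof. apply Dw_Icc_eq. lra. Qed.

Lemma one_plus_sq_pos a : 0 < 1 + a ^ 2.
Proof. pose proof (pow2_ge_0 a). lra. Qed.

Ltac solve_pos :=
  match goal with
  | |- _ <> 0 => apply Rgt_not_eq; solve_pos
  | |- _ => solve [repeat first [ assumption | apply pow_lt | apply Rmult_lt_0_compat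
                                | apply sqrt_lt_R0 | apply one_plus_sq_pos ]]
  end.

Ltac deriv_step :=
  first [ eassumption
        | match goal with H : forall y, ?D y -> has_deriv_within ?D _ y _ |- _ =>
            apply H; assumption end
        | apply has_deriv_within_const
        | eapply has_deriv_within_minus | eapply has_deriv_within_plus
        | eapply has_deriv_within_opp | eapply has_deriv_within_pow
        | eapply has_deriv_within_div | eapply has_deriv_within_mult
        | eapply has_deriv_within_sqrt ].

Ltac deriv := repeat deriv_step; try solve_pos.

Lemma Mf_deriv_identity (eps u u1 u2 s h h1 h2 : R) :
  u <> 0 -> s <> 0 -> s ^ 2 = 1 + u1 ^ 2 -> h = / 2 * (1 / (u * s) - u2 / s ^ 3) ->
  ((u1 * u1 + u * u2) * h1 + u * u1 * h2) / (1 + u1 ^ 2)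
    - u * u1 * h1 * (2 * u1 * u2) / (1 + u1 ^ 2) ^ 2
  + (u1 * h ^ 2 + u * (2 * h * h1)) / s - u * h ^ 2 * (u1 * u2 / s) / s ^ 2
  - (h1 / (1 + u1 ^ 2) - h * (2 * u1 * u2) / (1 + u1 ^ 2) ^ 2)
  - eps * (u1 / s - u * (u1 * u2 / s) / s ^ 2)
  = u * u1 * (1 / (u * s) * ((u1 / s - u * (u1 * u2 / s) / s ^ 2) * h1 + u / s * h2)
              + / 2 * h * (u2 / s ^ 3 + 1 / (u * s)) ^ 2 - 2 * eps * h).
Proof.
  intros hu hs hq ->. rewrite <- hq. apply Rminus_diag_uniq.
  (* Everything cancels identically except the coefficient of h1, which is a
     multiple of s^2 - (1 + u1^2). *)
  transitivity (u * u2 * h1 * (s ^ 2 - (1 + u1 ^ 2)) / s ^ 4); [field; auto|].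
  rewrite hq. field. exact hs.
Qed.

Local Notation nrm u y := (sqrt (1 + du1 u y ^ 2)).

(* H' by the quotient rule, with s = nrm u y and s' = u' u'' / s. *)
Definition dHf (u : R -> R) (y : R) : R :=
  / 2 * (- (du1 u y * nrm u y + u y * (du1 u y * du2 u y / nrm u y)) / (u y * nrm u y) ^ 2
         - (Dw I11 (du2 u) y * nrm u y - 3 * du2 u y * (du1 u y * du2 u y / nrm u y))
           / nrm u y ^ 4).

Section Curve.

Variables (eps : R) (u : R -> R).
Hypothesis hC4 : Cn_on I11 4 u.
Hypothesis hpos : forall x, I11 x -> 0 < u x.
Local Notation d := (has_deriv_within I11).

Let du0_deriv y : I11 y -> d u y (du1 u y) := proj1 hC4 0%nat ltac:(lia) y.
Let du1_deriv y : I11 y -> d (du1 u) y (du2 u y) := proj1 hC4 1%nat ltac:(lia) y.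
Let du2_deriv y : I11 y -> d (du2 u) y (Dw I11 (du2 u) y) := proj1 hC4 2%nat ltac:(lia) y.
Let du3_deriv y : I11 y -> d (Dw I11 (du2 u)) y (Dw I11 (Dw I11 (du2 u)) y) :=
  proj1 hC4 3%nat ltac:(lia) y.

Lemma Hf_has_deriv y : I11 y -> d (Hf u) y (dHf u y).
Proof.
  intros Hy. assert (uy := hpos y Hy). assert (sy : 0 < nrm u y) by solve_pos.
  eapply has_deriv_within_eq; [unfold Hf; deriv|].
  cbn [INR pred]. unfold dHf. field. split; lra.
Qed.

Lemma Dw_Hf y : I11 y -> Dw I11 (Hf u) y = dHf u y.
Proof. intros Hy. exact (Dw_I11_eq _ _ _ Hy (Hf_has_deriv y Hy)). Qed.

Lemma Dw_Hf_derivable x : I11 x -> exists l, d (Dw I11 (Hf u)) x l.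
Proof.
  intros Hx. assert (ux := hpos x Hx).
  eexists. apply (has_deriv_within_ext_in _ _ (dHf u) _ _ Dw_Hf Hx).
  unfold dHf. deriv.
Qed.

Section AtPoint.

Variables (x h2 : R).
Hypothesis Hx : I11 x.
Hypothesis Hh2 : d (Dw I11 (Hf u)) x h2.

Let ux : 0 < u x := hpos x Hx.
Let sx : 0 < nrm u x := sqrt_lt_R0 _ (one_plus_sq_pos _).

Lemma Dw_weighted_dHf :
  Dw I11 (fun y => u y / nrm u y * Dw I11 (Hf u) y) x
  = (du1 u x / nrm u x - u x * (du1 u x * du2 u x / nrm u x) / nrm u x ^ 2) * dHf u x
    + u x / nrm u x * h2.
Proof.
  apply (Dw_I11_eq _ _ _ Hx).
  eapply has_deriv_within_eq; [deriv|].
  cbn [INR pred]. rewrite Dw_Hf by exact Hx. field. lra.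
Qed.

Lemma Mf_has_deriv :
  d (Mf eps u) x
    (((du1 u x * du1 u x + u x * du2 u x) * dHf u x + u x * du1 u x * h2)
       / (1 + du1 u x ^ 2)
     - u x * du1 u x * dHf u x * (2 * du1 u x * du2 u x) / (1 + du1 u x ^ 2) ^ 2
     + (du1 u x * Hf u x ^ 2 + u x * (2 * Hf u x * dHf u x)) / nrm u x
     - u x * Hf u x ^ 2 * (du1 u x * du2 u x / nrm u x) / nrm u x ^ 2
     - (dHf u x / (1 + du1 u x ^ 2)
        - Hf u x * (2 * du1 u x * du2 u x) / (1 + du1 u x ^ 2) ^ 2)
     - eps * (du1 u x / nrm u x - u x * (du1 u x * du2 u x / nrm u x) / nrm u x ^ 2)).
Proof.
  assert (hH := Hf_has_deriv x Hx).
  eapply has_deriv_within_eq; [unfold Mf; deriv|].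
  cbn [INR pred]. rewrite Dw_Hf by exact Hx.
  pose proof (one_plus_sq_pos (du1 u x)). field. repeat split; lra.
Qed.

End AtPoint.

End Curve.

Theorem lemmaB1 (eps : R) (u : R -> R)
  (hC4 : Cn_on I11 4 u) (hpos : forall x, I11 x -> 0 < u x) :
  forall x, I11 x ->
    has_deriv_within I11 (Mf eps u) x
      (u x * du1 u x *
        ( 1 / (u x * sqrt (1 + du1 u x ^ 2)) *
            Dw I11 (fun y => u y / sqrt (1 + du1 u y ^ 2) * Dw I11 (Hf u) y) x
          + / 2 * Hf u x *
            (du2 u x / (sqrt (1 + du1 u x ^ 2)) ^ 3
             + 1 / (u x * sqrt (1 + du1 u x ^ 2))) ^ 2
          - 2 * eps * Hf u x)).
Proof.
  intros x Hx.
  destruct (Dw_Hf_derivable u hC4 hpos x Hx) as [h2 Hh2].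
  rewrite (Dw_weighted_dHf u hC4 hpos x h2 Hx Hh2).
  eapply has_deriv_within_eq; [exact (Mf_has_deriv eps u hC4 hpos x h2 Hx Hh2)|].
  assert (ux := hpos x Hx).
  apply Mf_deriv_identity; [lra | solve_pos | | reflexivity].
  apply pow2_sqrt, Rlt_le, one_plus_sq_pos.
Qed.
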